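(* Let $p>3$ be prime, $t\in\{1,3,p,3p\}$, and $1\le r\le 3p-1$ with $\gcd(r,3p)=1$. Then $\Lambda(3p,r,t)=\{1\}$.
   Context: $|r|_m$ is the multiplicative order of $r$ modulo $m$ (with $|r|_1=1$). $S_k(x):=1+x+\cdots+x^{k-1}$, $S_0:=0$. For $m\ge1$ with $\gcd(r,m)=1$, $\kappa(m,r,t):=\dfrac{m|r|_m}{\gcd(m,\,tS_{|r|_m}(r))}$. For $d\in\{1,3,p,3p\}$, $\Lambda(d,r,t):=\{\ell>0:\ \ell \text{ divides } \frac{|r|_{3p}}{\gcd(\kappa(d,r,t),|r|_{3p})}\text{ and }\gcd(r^{\ell\kappa(d,r,t)}-1,3p)=d\}$. *)

From mathcomp Require Import all_boot.
Set Implicit Arguments. Unset Strict Implicit. Unset Printing Implicit Defensive.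

(* |r|_m : multiplicative order of r modulo m (m >= 1, coprime r m):
   least k >= 1 with r^k = 1 (mod m). Such k exists and is <= m when
   coprime r m, so searching in 1..m suffices. *)
Definition ordm (m r : nat) : nat :=
  head 0 [seq k <- iota 1 m | r ^ k == 1 %[mod m]].

Definition Ssum (k x : nat) : nat := \sum_(i < k) x ^ i.

Definition kappa (m r t : nat) : nat :=
  (m * ordm m r) %/ gcdn m (t * Ssum (ordm m r) r).

Definition Lambda (p d r t : nat) : pred nat := fun l =>
  [&& 0 < l,
      l %| ordm (3 * p) r %/ gcdn (kappa d r t) (ordm (3 * p) r) &
      gcdn (r ^ (l * kappa d r t) - 1) (3 * p) == d].

From mathcomp Require Import all_boot.
From mathcomp Require Import cyclic.

(* For d = 3p the multiplicative order |r|_{3p} divides kappa(3p, r, t), so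
   the divisibility constraint in Lambda forces l = 1, and r^kappa = 1 mod 3p
   makes the gcd condition hold for l = 1. *)

Lemma totient_leq n : totient n <= n.
Proof.
rewrite totient_count_coprime.
apply: leq_trans (_ : \sum_(0 <= d < n) 1 <= n).
  by apply: leq_sum => i _; case: (coprime n i).
by rewrite sum_nat_const_nat subn0 muln1.
Qed.

Section MultiplicativeOrder.

Variables m r : nat.
Hypotheses (m_gt0 : 0 < m) (r_coprime : coprime r m).

(* Euler's theorem puts totient m in the searched range 1..m, so the
   filtered list is nonempty and its head is a genuine exponent. *)
Lemma ordm_in_range :
  ordm m r \in [seq k <- iota 1 m | r ^ k == 1 %[mod m]].
Proof.
have phi_in : totient m \in [seq k <- iota 1 m | r ^ k == 1 %[mod m]].
  rewrite mem_filter mem_iota (Euler_exp_totient r_coprime) eqxx /=.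
  by rewrite totient_gt0 m_gt0 add1n ltnS totient_leq.
rewrite /ordm; move: phi_in.
by case: [seq k <- iota 1 m | _] => // x s _; rewrite mem_head.
Qed.

Lemma ordm_gt0 : 0 < ordm m r.
Proof. by move: ordm_in_range; rewrite mem_filter mem_iota => /and3P[]. Qed.

Lemma expn_ordm : r ^ ordm m r = 1 %[mod m].
Proof. by move: ordm_in_range; rewrite mem_filter => /andP[/eqP]. Qed.

Lemma kappaE t :
  kappa m r t = m %/ gcdn m (t * Ssum (ordm m r) r) * ordm m r.
Proof. by rewrite /kappa divn_mulAC // dvdn_gcdl. Qed.

Lemma dvdn_ordm_kappa t : ordm m r %| kappa m r t.
Proof. by rewrite kappaE dvdn_mull. Qed.

Lemma expn_kappa t : r ^ kappa m r t = 1 %[mod m].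
Proof.
have [k ->] := dvdnP (dvdn_ordm_kappa t).
by rewrite mulnC expnM -modnXm expn_ordm modnXm exp1n.
Qed.

Lemma dvdn_expn_kappa_sub1 t : m %| r ^ kappa m r t - 1.
Proof.
case: (posnP r) r_coprime => [-> | r_gt0 _].
  by rewrite /coprime gcd0n => /eqP ->.
by rewrite -eqn_mod_dvd ?expn_gt0 ?r_gt0 // expn_kappa.
Qed.

End MultiplicativeOrder.

Theorem lemma5p5 (p t r : nat) :
  prime p -> 3 < p -> t \in [:: 1; 3; p; 3 * p] ->
  1 <= r <= 3 * p - 1 -> coprime r (3 * p) ->
  forall l : nat, Lambda p (3 * p) r t l <-> l = 1.
Proof.
move=> p_prime _ _ _ r_coprime l.
have m_gt0 : 0 < 3 * p by rewrite muln_gt0 /= prime_gt0.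
have gcd_kappa_ordm : gcdn (kappa (3 * p) r t) (ordm (3 * p) r) = ordm (3 * p) r.
  exact/gcdn_idPr/dvdn_ordm_kappa.
rewrite /Lambda gcd_kappa_ordm divnn ordm_gt0 // dvdn1; split.
  by case/and3P => _ /eqP.
move=> ->; rewrite mul1n eqxx /=.
exact/eqP/gcdn_idPr/dvdn_expn_kappa_sub1.
Qed.
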